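(* Let $p,m,n\in\mathbb{R}$, $a,b,c\in\mathbb{O}$, and $$\mathcal{A}=\begin{pmatrix}p&a&\overline{b}\\ \overline{a}&m&c\\ b&\overline{c}&n\end{pmatrix}.$$ Suppose $v=(x,y,z)^T\in\mathbb{O}^3\setminus\{0\}$ and $\lambda\in\mathbb{O}$ satisfy $\mathcal{A}v=v\lambda$. Then $$\mathrm{Im}(\lambda)=\frac{[x,a,y]+[z,b,x]+[y,c,z]}{|x|^2+|y|^2+|z|^2},$$ and if moreover $|x|^2+|y|^2\neq|z|^2$, $$\mathrm{Re}(\lambda)=\frac{p|x|^2+m|y|^2-n|z|^2+2\,x\cdot(ay)}{|x|^2+|y|^2-|z|^2}.$$ In particular, if $|x|^2+|y|^2+|z|^2=1$ then $\mathrm{Im}(\lambda)=[x,a,y]+[z,b,x]+[y,c,z]$.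
   Context: $\mathbb{O}$ denotes the octonions, $\overline{a}$ conjugation, $\mathrm{Re}(a)=\frac12(a+\overline a)$, $\mathrm{Im}(a)=\frac12(a-\overline a)$, $|a|$ the norm, $[a,b,c]=(ab)c-a(bc)$ the associator, and $a\cdot b=\frac12(a\overline b+b\overline a)$ the Euclidean inner product of $\mathbb{R}^8$. $v\lambda$ means each component multiplied on the right by $\lambda$. *)

(* Octonions over a real field R, built by the Cayley-Dickson
   construction from Hamilton quaternions. *)
From HB Require Import structures.
From mathcomp Require Import all_boot all_order all_algebra.
Set Implicit Arguments. Unset Strict Implicit. Unset Printing Implicit Defensive.
Import Order.TTheory GRing.Theory Num.Theory.
Local Open Scope ring_scope.

Section Octonions.
Variable R : realFieldType.

Record quat := Quat { q0 : R; q1 : R; q2 : R; q3 : R }.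

Definition qzero : quat := Quat 0 0 0 0.
Definition qadd (a b : quat) : quat :=
  Quat (q0 a + q0 b) (q1 a + q1 b) (q2 a + q2 b) (q3 a + q3 b).
Definition qopp (a : quat) : quat := Quat (- q0 a) (- q1 a) (- q2 a) (- q3 a).
Definition qconj (a : quat) : quat := Quat (q0 a) (- q1 a) (- q2 a) (- q3 a).
Definition qmul (a b : quat) : quat :=
  Quat (q0 a * q0 b - q1 a * q1 b - q2 a * q2 b - q3 a * q3 b)
       (q0 a * q1 b + q1 a * q0 b + q2 a * q3 b - q3 a * q2 b)
       (q0 a * q2 b - q1 a * q3 b + q2 a * q0 b + q3 a * q1 b)
       (q0 a * q3 b + q1 a * q2 b - q2 a * q1 b + q3 a * q0 b).

(* Octonions as pairs (a, b) of quaternions, with the Cayley-Dickson product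
   (a,b)(c,d) = (a c - d^conj b, d a + b c^conj), conjugate (a,b)^conj = (a^conj, -b). *)
Record oct := Oct { olo : quat; ohi : quat }.

Definition ozero : oct := Oct qzero qzero.
Definition oreal (r : R) : oct := Oct (Quat r 0 0 0) qzero.
Definition oadd (x y : oct) : oct := Oct (qadd (olo x) (olo y)) (qadd (ohi x) (ohi y)).
Definition oopp (x : oct) : oct := Oct (qopp (olo x)) (qopp (ohi x)).
Definition osub (x y : oct) : oct := oadd x (oopp y).
Definition omul (x y : oct) : oct :=
  Oct (qadd (qmul (olo x) (olo y)) (qopp (qmul (qconj (ohi y)) (ohi x))))
      (qadd (qmul (ohi y) (olo x)) (qmul (ohi x) (qconj (olo y)))).
Definition oconj (x : oct) : oct := Oct (qconj (olo x)) (qopp (ohi x)).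
Definition oscale (r : R) (x : oct) : oct := omul (oreal r) x.

Definition ocoords (x : oct) : seq R :=
  [:: q0 (olo x); q1 (olo x); q2 (olo x); q3 (olo x);
      q0 (ohi x); q1 (ohi x); q2 (ohi x); q3 (ohi x)].

(* Re(a) = (a + a^conj)/2 is the real octonion with coordinate q0 (olo a);
   we record it as that real number. *)
Definition oRe (x : oct) : R := q0 (olo x).
Definition oIm (x : oct) : oct := oscale (2^-1) (osub x (oconj x)).
Definition onorm2 (x : oct) : R := \sum_(c <- ocoords x) c ^+ 2.
Definition odot (x y : oct) : R :=
  \sum_(c <- zip (ocoords x) (ocoords y)) c.1 * c.2.
Definition oassoc (a b c : oct) : oct :=
  osub (omul (omul a b) c) (omul a (omul b c)).

End Octonions.

Arguments ozero {R}.

From mathcomp Require Import all_boot all_order all_algebra ring lra.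
Import Order.TTheory GRing.Theory Num.Theory.
Local Open Scope ring_scope.
Set Implicit Arguments.

(* Multiply each row of [A v = v lam] on the left by the conjugate of the
   corresponding component of [v].  Alternativity gives [x^*(x lam) = |x|^2 lam],
   and [x^*(p x)] is real.  The off-diagonal terms pair up across rows: their
   imaginary parts satisfy [Im(x^*(a y)) + Im(y^*(a^* x)) = [x,a,y]], so the sum
   of the three rows yields [|v|^2 Im lam = [x,a,y] + [z,b,x] + [y,c,z]].  For the
   real parts, [Re(x^* w) = x.w] and [(a^* x).y = x.(a y)], so adding the first
   two rows and subtracting the third cancels the [b]- and [c]-terms. *)

Ltac oct_expand :=
  repeat match goal with o : oct _ |- _ => case: o => [[? ? ? ?] [? ? ? ?]] end;
  rewrite /onorm2 /odot /= ?big_cons ?big_nil /=;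
  cbv [oRe ozero oIm oassoc osub oscale oreal oadd oopp omul oconj
       qadd qopp qmul qconj qzero q0 q1 q2 q3 olo ohi].

Ltac oct_ring := oct_expand; congr (Oct (Quat _ _ _ _) (Quat _ _ _ _)); ring.

Section OctonionAlgebra.
Variable R : realFieldType.
Implicit Types (r s : R) (u v w x y a : oct R).

Definition ocoord k u : R := nth 0 (ocoords u) k.

Lemma ocoord_add k u v : ocoord k (oadd u v) = ocoord k u + ocoord k v.
Proof.
case: u v => [[? ? ? ?] [? ? ? ?]] [[? ? ? ?] [? ? ? ?]].
by do 8 case: k => [|k] //; rewrite /ocoord /= !nth_nil addr0.
Qed.

Lemma ocoord_scale k r u : ocoord k (oscale r u) = r * ocoord k u.
Proof.
case: u => [[? ? ? ?] [? ? ? ?]].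
do 8 (case: k => [|k]; first by rewrite /ocoord /=; ring).
by rewrite /ocoord /= !nth_nil mulr0.
Qed.

Lemma ocoord_zero k : ocoord k (@ozero R) = 0.
Proof. by do 8 case: k => [|k] //; rewrite /ocoord /= nth_nil. Qed.

Lemma oct_coord_ext u v : (forall k, ocoord k u = ocoord k v) -> u = v.
Proof.
case: u v => [[? ? ? ?] [? ? ? ?]] [[? ? ? ?] [? ? ? ?]] e.
move: (e 0%N) (e 1%N) (e 2%N) (e 3%N) (e 4%N) (e 5%N) (e 6%N) (e 7%N).
by rewrite /ocoord /= => -> -> -> -> -> -> -> ->.
Qed.

Lemma oscaleA r s u : oscale r (oscale s u) = oscale (r * s) u.
Proof. oct_ring. Qed.

Lemma oscale1 u : oscale 1 u = u.
Proof. oct_ring. Qed.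

Lemma omulDr u v w : omul u (oadd v w) = oadd (omul u v) (omul u w).
Proof. oct_ring. Qed.

Lemma onorm2_ge0 x : 0 <= onorm2 x.
Proof. by apply: sumr_ge0 => i _; exact: sqr_ge0. Qed.

Lemma onorm2_eq0 x : onorm2 x = 0 -> x = ozero.
Proof.
move/eqP; rewrite /onorm2 psumr_eq0 => [|i _]; last exact: sqr_ge0.
case: x => [[? ? ? ?] [? ? ? ?]] /=; rewrite !sqrf_eq0.
by do 8 case/andP=> /eqP->.
Qed.

Lemma omul_conj_mulr x y : omul (oconj x) (omul x y) = oscale (onorm2 x) y.
Proof. oct_ring. Qed.

Lemma omul_conj_scale r x : omul (oconj x) (oscale r x) = oreal (r * onorm2 x).
Proof. oct_ring. Qed.

Lemma oIm_add u v : oIm (oadd u v) = oadd (oIm u) (oIm v).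
Proof. oct_ring. Qed.

Lemma oIm_scale r u : oIm (oscale r u) = oscale r (oIm u).
Proof. oct_ring. Qed.

Lemma oIm_oreal r : oIm (oreal r) = ozero.
Proof. oct_ring. Qed.

Lemma oRe_add u v : oRe (oadd u v) = oRe u + oRe v.
Proof. by []. Qed.

Lemma oRe_scale r u : oRe (oscale r u) = r * oRe u.
Proof. oct_expand; ring. Qed.

Lemma oRe_oreal r : oRe (oreal r) = r.
Proof. by []. Qed.

Lemma oRe_conj_mul x y : oRe (omul (oconj x) y) = odot x y.
Proof. oct_expand; ring. Qed.

Lemma odotC x y : odot x y = odot y x.
Proof. oct_expand; ring. Qed.

Lemma odot_conj_mull a x y : odot (omul (oconj a) x) y = odot x (omul a y).
Proof. oct_expand; ring. Qed.

Lemma osub_conj_pair x a y :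
  let u := oadd (omul (oconj x) (omul a y)) (omul (oconj y) (omul (oconj a) x)) in
  osub u (oconj u) = oscale 2 (oassoc x a y).
Proof. oct_ring. Qed.

Lemma oIm_conj_pair x a y :
  oadd (oIm (omul (oconj x) (omul a y))) (oIm (omul (oconj y) (omul (oconj a) x)))
  = oassoc x a y.
Proof. by rewrite -oIm_add {1}/oIm osub_conj_pair oscaleA mulVf ?pnatr_eq0 ?oscale1. Qed.

End OctonionAlgebra.

Section EigenEquation.
Variable R : realFieldType.
Variables (p m n : R) (a b c x y z lam : oct R).
Hypothesis row_x : oadd (oadd (oscale p x) (omul a y)) (omul (oconj b) z) = omul x lam.
Hypothesis row_y : oadd (oadd (omul (oconj a) x) (oscale m y)) (omul c z) = omul y lam.
Hypothesis row_z : oadd (oadd (omul b x) (omul (oconj c) y)) (oscale n z) = omul z lam.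

Lemma eigen_Im_sum :
  oscale (onorm2 x + onorm2 y + onorm2 z) (oIm lam)
  = oadd (oadd (oassoc x a y) (oassoc z b x)) (oassoc y c z).
Proof.
have Im_row u v : v = omul u lam -> oIm (omul (oconj u) v) = oscale (onorm2 u) (oIm lam).
  by move->; rewrite omul_conj_mulr oIm_scale.
move: (Im_row _ _ row_x) (Im_row _ _ row_y) (Im_row _ _ row_z).
rewrite !omulDr !oIm_add !omul_conj_scale !oIm_oreal => Ex Ey Ez.
have Pxy := oIm_conj_pair x a y; have Pzx := oIm_conj_pair z b x.
have Pyz := oIm_conj_pair y c z.
apply: oct_coord_ext => k.
move: Ex Ey Ez Pxy Pzx Pyz => /(congr1 (ocoord k)) + /(congr1 (ocoord k)) + /(congr1 (ocoord k))
  + /(congr1 (ocoord k)) + /(congr1 (ocoord k)) + /(congr1 (ocoord k)).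
rewrite !ocoord_add !ocoord_scale !ocoord_zero; lra.
Qed.

Lemma eigen_Re_sum :
  (onorm2 x + onorm2 y - onorm2 z) * oRe lam
  = p * onorm2 x + m * onorm2 y - n * onorm2 z + 2 * odot x (omul a y).
Proof.
have Re_row u v : v = omul u lam -> oRe (omul (oconj u) v) = onorm2 u * oRe lam.
  by move->; rewrite omul_conj_mulr oRe_scale.
move: (Re_row _ _ row_x) (Re_row _ _ row_y) (Re_row _ _ row_z).
rewrite !omulDr !oRe_add !omul_conj_scale !oRe_oreal !oRe_conj_mul.
rewrite [odot y _]odotC [odot x (omul _ z)]odotC [odot z (omul (oconj c) _)]odotC.
rewrite !odot_conj_mull; lra.
Qed.

End EigenEquation.

Theorem mainTheorem6 (R : realFieldType) (p m n : R) (a b c x y z lam : oct R) :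
  ~ (x = ozero /\ y = ozero /\ z = ozero) ->
  oadd (oadd (oscale p x) (omul a y)) (omul (oconj b) z) = omul x lam ->
  oadd (oadd (omul (oconj a) x) (oscale m y)) (omul c z) = omul y lam ->
  oadd (oadd (omul b x) (omul (oconj c) y)) (oscale n z) = omul z lam ->
  let S := oadd (oadd (oassoc x a y) (oassoc z b x)) (oassoc y c z) in
  let N := onorm2 x + onorm2 y + onorm2 z in
  [/\ oIm lam = oscale N^-1 S,
      onorm2 x + onorm2 y != onorm2 z ->
        oRe lam = (p * onorm2 x + m * onorm2 y - n * onorm2 z
                   + 2 * odot x (omul a y))
                  / (onorm2 x + onorm2 y - onorm2 z)
    & N = 1 -> oIm lam = S].
Proof.
move=> v_neq0 row_x row_y row_z S N.
have N_neq0 : N != 0.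
  apply/eqP=> N0; apply: v_neq0.
  have := onorm2_ge0 x; have := onorm2_ge0 y; have := onorm2_ge0 z.
  by split; [|split]; apply: onorm2_eq0; rewrite /N in N0; lra.
have Im_scaled : oscale N (oIm lam) = S := eigen_Im_sum row_x row_y row_z.
have Im_lam : oIm lam = oscale N^-1 S by rewrite -Im_scaled oscaleA mulVf // oscale1.
split=> // [D_neq0 | N1]; last by rewrite Im_lam N1 invr1 oscale1.
apply: (canRL (mulfK _)); first by rewrite subr_eq0.
by rewrite mulrC (eigen_Re_sum row_x row_y row_z).
Qed.
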